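(* For every $n\geq 0$, the map $w\mapsto P_w$ induces a bijection from the set of packed words of length $n$ to the set of isomorphism classes of weak plane posets with $n$ elements. Its inverse is described as follows: given a weak plane poset $P$ with $n$ elements, identify $P$ with $[n]$ via the unique bijection that is increasing from $(P,\ll)$ to $([n],\leq)$, where $x\ll y\iff(y\leq_1 x$ or $x\leq_2 y)$ (a total order on $P$); then the inverse image of the class of $P$ is the packed word $w$ associated to the total quasi-order $\preceq$ of $P$, i.e. the packed word with $w(i)\leq w(j)\iff i\preceq j$.
   Context: A packed word of length $n$ is a word $w(1)\cdots w(n)$ of positive integers whose set of letters is $\{1,\dots,k\}$ for some $k$. A double poset is a finite set with two partial orders $\leq_1,\leq_2$; two double posets are isomorphic if there is a bijection between them which, together with its inverse, preserves both orders. A weak plane poset is a double poset such that (1) $x\leq_1 y$ and $x\leq_2 y$ imply $x=y$, and (2) the relation $x\preceq y\iff(x\leq_1 y$ or $x\leq_2 y)$ is a total quasi-order (reflexive, transitive, all elements comparable). For a packed word $w$ of length $n$, $P_w=([n],\leq_1,\leq_2)$ with $i\leq_1 j\iff(i\geq j$ and $w(i)\leq w(j))$ and $i\leq_2 j\iff(i\leq j$ and $w(i)\leq w(j))$; it is a weak plane poset. To a total quasi-order $\preceq$ on $[n]$ one associates the packed word $w$ with $w(i)\leq w(j)\iff i\preceq j$. *)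

From mathcomp Require Import all_boot.
Set Implicit Arguments. Unset Strict Implicit. Unset Printing Implicit Defensive.

Definition packed (w : seq nat) : bool :=
  (0 \notin w) && all (fun a => a \in w) (iota 1 (\max_(a <- w) a)).

Definition is_porder (T : finType) (r : rel T) : Prop :=
  reflexive r /\ antisymmetric r /\ transitive r.

Definition double_poset (T : finType) (le1 le2 : rel T) : Prop :=
  is_porder le1 /\ is_porder le2.

Definition qrel (T : finType) (le1 le2 : rel T) : rel T :=
  fun x y => le1 x y || le2 x y.

Definition total_quasi_order (T : finType) (r : rel T) : Prop :=
  reflexive r /\ transitive r /\ total r.

Definition weak_plane_poset (T : finType) (le1 le2 : rel T) : Prop :=
  double_poset le1 le2 /\
  (forall x y, le1 x y -> le2 x y -> x = y) /\
  total_quasi_order (qrel le1 le2).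

Definition dp_iso (T1 T2 : finType) (a1 a2 : rel T1) (b1 b2 : rel T2) : Prop :=
  exists f : T1 -> T2, bijective f /\
    forall x y, a1 x y = b1 (f x) (f y) /\ a2 x y = b2 (f x) (f y).

(* The double poset P_w on positions of w (0-based positions 'I_n, i.e.
   position i here corresponds to position i+1 in the paper). *)
Definition Pw1 (n : nat) (w : seq nat) : rel 'I_n :=
  fun i j => (j <= i) && (nth 0 w i <= nth 0 w j).
Definition Pw2 (n : nat) (w : seq nat) : rel 'I_n :=
  fun i j => (i <= j) && (nth 0 w i <= nth 0 w j).

Definition llrel (T : finType) (le1 le2 : rel T) : rel T :=
  fun x y => le1 y x || le2 x y.
Arguments Pw1 n w i j : clear implicits.
Arguments Pw2 n w i j : clear implicits.

From mathcomp Require Import all_boot.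
Set Implicit Arguments. Unset Strict Implicit. Unset Printing Implicit Defensive.

(* In a weak plane poset, x <=_1 y iff y << x and x ⪯ y, and x <=_2 y iff
   x << y and x ⪯ y, so the double poset is determined by the total order <<
   and the total quasi-order ⪯.  For P_w these are the order of positions and
   the order of letters, so ranking P along << and reading ⪯ as a packed word
   inverts w |-> P_w.  Uniqueness comes from two rigidity facts: an increasing
   bijection of [n] is the identity, and a packed word is determined by the
   order pattern of its letters. *)

Lemma ord_mono_ge n (h : 'I_n -> 'I_n) :
  {mono h : i j / i <= j} -> forall i : 'I_n, i <= h i.
Proof.
move=> h_mono [m]; elim: m => [|m IHm] lt_m1_n //.
have lt_m_n := ltnW lt_m1_n.
have lt_h : h (Ordinal lt_m_n) < h (Ordinal lt_m1_n).
  by rewrite ltnNge h_mono -ltnNge.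
exact: leq_ltn_trans (IHm lt_m_n) lt_h.
Qed.

Lemma ord_mono_id n (h : 'I_n -> 'I_n) : {mono h : i j / i <= j} -> h =1 id.
Proof.
move=> h_mono i; have h_inj : injective h.
  move=> j k e; apply/val_inj/anti_leq.
  by rewrite -[j <= k]h_mono -[k <= j]h_mono e leqnn.
have g_mono : {mono invF h_inj : i j / i <= j}.
  by move=> j k; rewrite -h_mono !f_invF.
apply/val_inj/anti_leq => /=; rewrite ord_mono_ge // andbT.
by have := ord_mono_ge g_mono (h i); rewrite invF_f.
Qed.

Lemma sorted_index_leq (T : eqType) (r : rel T) (s : seq T) :
  reflexive r -> antisymmetric r -> transitive r -> sorted r s ->
  {in s &, forall x y, (index x s <= index y s) = r x y}.
Proof.
move=> r_refl r_anti r_trans s_sorted x y xs ys.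
apply/idP/idP; first exact: sorted_leq_index.
move=> rxy; rewrite leqNgt; apply/negP=> lt_yx.
have ryx := sorted_leq_index r_trans r_refl s_sorted y x ys xs (ltnW lt_yx).
by move: lt_yx; rewrite (r_anti x y) ?rxy ?ltnn.
Qed.

Lemma total_order_rank (T : finType) (r : rel T) n : #|T| = n ->
  is_porder r -> total r ->
  exists f : T -> 'I_n, bijective f /\ forall x y, r x y = (f x <= f y).
Proof.
move=> card_T [r_refl [r_anti r_trans]] r_total.
pose s := sort r (enum T).
have s_sorted : sorted r s by apply: sort_sorted.
have mem_s x : x \in s by rewrite mem_sort mem_enum.
have rank_lt x : index x s < n.
  by rewrite -card_T cardE -(size_sort r) index_mem.
pose f x := Ordinal (rank_lt x).
have f_mono x y : r x y = (f x <= f y) by rewrite /= (sorted_index_leq r_refl).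
have f_inj : injective f.
  by move=> x y e; apply: r_anti; rewrite !f_mono e leqnn.
by exists f; split=> //; apply: inj_card_bij; rewrite ?card_ord ?card_T.
Qed.

Lemma order_iso_unique (T : finType) (r : rel T) n (f g : T -> 'I_n) :
  bijective f -> (forall x y, r x y = (f x <= f y)) ->
  (forall x y, r x y = (g x <= g y)) -> g =1 f.
Proof.
case=> f' fK f'K f_mono g_mono x.
have gf'_id : g \o f' =1 id.
  by apply: ord_mono_id => i j; rewrite /= -g_mono f_mono !f'K.
by rewrite -[RHS]gf'_id /= fK.
Qed.

Lemma card_lower_set_mono (T : finType) (r : rel T) :
  transitive r -> total r ->
  forall x y, r x y = (#|[set z | r z x]| <= #|[set z | r z y]|).
Proof.
move=> r_trans r_total x y; apply/idP/idP=> [rxy | ].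
  by apply/subset_leq_card/subsetP=> z; rewrite !inE => /r_trans; apply.
apply: contraTT => Nrxy; rewrite -ltnNge; apply/proper_card/properP; split.
  have ryx : r y x by move: (r_total x y); rewrite (negbTE Nrxy).
  by apply/subsetP=> z; rewrite !inE => /r_trans; apply.
by exists x; rewrite !inE ?(negbTE Nrxy) //; move: (r_total x x); rewrite orbb.
Qed.

Lemma packed_mem_pred w a : packed w -> a.+2 \in w -> a.+1 \in w.
Proof.
case/andP=> _ /allP letters aw; apply: letters; rewrite mem_iota /= ltnS.
exact: leq_trans (leqnSn _) (leq_bigmax_seq (F := id) _ aw isT).
Qed.

Definition same_pattern (w w' : seq nat) : Prop :=
  forall i j, i < size w -> j < size w ->
    (nth 0 w i <= nth 0 w j) = (nth 0 w' i <= nth 0 w' j).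

Lemma packed_leq_pattern w w' : packed w -> 0 \notin w' ->
  size w = size w' -> same_pattern w w' ->
  forall i, i < size w -> nth 0 w i <= nth 0 w' i.
Proof.
move=> w_packed w'0 size_eq pattern.
suff le_w' v i : i < size w -> nth 0 w i = v -> v <= nth 0 w' i.
  by move=> i iw; apply: le_w'.
elim/ltn_ind: v i => -[|[|v]] IHv i iw wi //.
  rewrite lt0n; apply: contraNneq w'0 => <-.
  by rewrite mem_nth // -size_eq.
have vw : v.+1 \in w by apply: packed_mem_pred w_packed _; rewrite -wi mem_nth.
have jw : index v.+1 w < size w by rewrite index_mem.
have lt_w'j_w'i : nth 0 w' (index v.+1 w) < nth 0 w' i.
  by rewrite ltnNge -pattern // nth_index // wi -ltnNge.
exact: leq_ltn_trans (IHv _ (ltnSn _) _ jw (nth_index 0 vw)) lt_w'j_w'i.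
Qed.

Lemma packed_eq_pattern w w' : packed w -> packed w' ->
  size w = size w' -> same_pattern w w' -> w = w'.
Proof.
move=> w_packed w'_packed size_eq pattern.
have pattern' : same_pattern w' w.
  by move=> i j; rewrite -size_eq => iw jw; rewrite pattern.
apply: (eq_from_nth (x0 := 0) size_eq) => i iw; apply/anti_leq.
rewrite packed_leq_pattern ?(andP w'_packed).1 //=.
by rewrite packed_leq_pattern ?(andP w_packed).1 // -size_eq.
Qed.

Definition pack (u : seq nat) : seq nat :=
  [seq (index a (sort leq (undup u))).+1 | a <- u].

Lemma size_pack u : size (pack u) = size u.
Proof. exact: size_map. Qed.

Lemma pack_packed u : packed (pack u).
Proof.
set d := sort leq (undup u).
have mem_d a : (a \in d) = (a \in u) by rewrite mem_sort mem_undup.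
apply/andP; split; first by apply/mapP=> -[].
apply/allP=> k; rewrite mem_iota add1n ltnS => /andP[k_gt0 k_le].
have max_le : \max_(a <- pack u) a <= size d.
  by apply/bigmax_leqP_seq=> _ /mapP[a au ->] _; rewrite index_mem mem_d.
have k_lt : k.-1 < size d by rewrite prednK // (leq_trans k_le).
have d_uniq : uniq d by rewrite sort_uniq undup_uniq.
apply/mapP; exists (nth 0 d k.-1); first by rewrite -mem_d mem_nth.
by rewrite index_uniq // prednK.
Qed.

Lemma same_pattern_pack u : same_pattern (pack u) u.
Proof.
move=> i j; rewrite size_pack => iu ju; rewrite !(nth_map 0) // ltnS.
have mem_d a : (a \in sort leq (undup u)) = (a \in u).
  by rewrite mem_sort mem_undup.
rewrite (sorted_index_leq leqnn anti_leq leq_trans) ?mem_d ?mem_nth //.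
exact/sort_sorted/leq_total.
Qed.

Lemma packed_word_of_preorder (T : finType) (r : rel T) n (f : T -> 'I_n) :
  transitive r -> total r -> bijective f ->
  exists w, [/\ size w = n, packed w &
    forall x y, (nth 0 w (f x) <= nth 0 w (f y)) = r x y].
Proof.
move=> r_trans r_total [f' fK f'K].
pose u := [seq #|[set z | r z (f' i)]| | i <- enum 'I_n].
have size_u : size u = n by rewrite size_map size_enum_ord.
exists (pack u); split; rewrite ?size_pack ?pack_packed // => x y.
rewrite same_pattern_pack ?size_pack ?size_u //.
rewrite /u !(nth_map (f x)) -?enumT ?size_enum_ord // !nth_ord_enum !fK.
by rewrite -card_lower_set_mono.
Qed.

Section WeakPlanePoset.

Variables (T : finType) (le1 le2 : rel T).
Hypothesis wpp : weak_plane_poset le1 le2.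

Let le1_refl : reflexive le1. Proof. by case: wpp => [[[]]]. Qed.
Let le1_anti : antisymmetric le1. Proof. by case: wpp => [[[_ []]]]. Qed.
Let le1_trans : transitive le1. Proof. by case: wpp => [[[_ []]]]. Qed.
Let le2_refl : reflexive le2. Proof. by case: wpp => [[_ []]]. Qed.
Let le2_anti : antisymmetric le2. Proof. by case: wpp => [[_ [_ []]]]. Qed.
Let le2_trans : transitive le2. Proof. by case: wpp => [[_ [_ []]]]. Qed.
Let le1_le2_eq x y : le1 x y -> le2 x y -> x = y.
Proof. by case: wpp => [_ [eq12 _]]; apply: eq12. Qed.
Let qrel_total : total (qrel le1 le2).
Proof. by case: wpp => [_ [_ [_ []]]]. Qed.

Lemma llrel_total : total (llrel le1 le2).
Proof.
move=> x y; move: (qrel_total x y); rewrite /llrel /qrel.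
by case/orP=> /orP[] ->; rewrite ?orbT.
Qed.

Lemma llrel_porder : is_porder (llrel le1 le2).
Proof.
split; first by move=> x; rewrite /llrel le2_refl orbT.
split=> [x y | y x z]; rewrite /llrel.
  case/andP=> /orP[le_yx | le_xy] /orP[le_xy' | le_yx'].
  - by apply: le1_anti; rewrite le_yx le_xy'.
  - exact/esym/le1_le2_eq.
  - exact: le1_le2_eq.
  - by apply: le2_anti; rewrite le_xy le_yx'.
(* In the mixed cases, comparing x and z for ⪯ either concludes or forces
   y to be <=_1- and <=_2-below x or z, i.e. equal to it. *)
case/orP=> [le_yx | le_xy] /orP[le_zy | le_yz].
- by rewrite (le1_trans le_zy le_yx).
- have [/orP[le_xz | le_xz] | /orP[le_zx | le_zx]] := orP (qrel_total x z);
    rewrite ?le_xz ?le_zx ?orbT //.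
  + by rewrite -(le1_le2_eq (le1_trans le_yx le_xz) le_yz) le_yx.
  + by rewrite -(le1_le2_eq le_yx (le2_trans le_yz le_zx)) le_yz orbT.
- have [/orP[le_xz | le_xz] | /orP[le_zx | le_zx]] := orP (qrel_total x z);
    rewrite ?le_xz ?le_zx ?orbT //.
  + by rewrite (le1_le2_eq (le1_trans le_xz le_zy) le_xy) le_zy.
  + by rewrite (le1_le2_eq le_zy (le2_trans le_zx le_xy)) le_xy orbT.
- by rewrite (le2_trans le_xy le_yz) orbT.
Qed.

Lemma le1_llrel_qrel x y : le1 x y = llrel le1 le2 y x && qrel le1 le2 x y.
Proof.
rewrite /llrel /qrel -orb_andr.
by apply/idP/orP=> [-> | [// | /le2_anti ->]]; [left | apply: le1_refl].
Qed.

Lemma le2_llrel_qrel x y : le2 x y = llrel le1 le2 x y && qrel le1 le2 x y.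
Proof.
rewrite /llrel /qrel -orb_andl.
by apply/idP/orP=> [-> | [/le1_anti -> | //]]; [right | apply: le2_refl].
Qed.

End WeakPlanePoset.

Lemma wpp_iso_llrel_qrel (T1 T2 : finType) (a1 a2 : rel T1) (b1 b2 : rel T2)
    (f : T1 -> T2) :
  weak_plane_poset a1 a2 -> weak_plane_poset b1 b2 -> bijective f ->
  (forall x y, llrel a1 a2 x y = llrel b1 b2 (f x) (f y)) ->
  (forall x y, qrel a1 a2 x y = qrel b1 b2 (f x) (f y)) ->
  dp_iso a1 a2 b1 b2.
Proof.
move=> wppa wppb f_bij f_llrel f_qrel; exists f; split=> // x y.
rewrite (le1_llrel_qrel wppa) (le1_llrel_qrel wppb).
by rewrite (le2_llrel_qrel wppa) (le2_llrel_qrel wppb) !f_llrel !f_qrel.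
Qed.

Lemma llrel_Pw n w (i j : 'I_n) : llrel (Pw1 n w) (Pw2 n w) i j = (i <= j).
Proof. by rewrite /llrel /Pw1 /Pw2 -andb_orr leq_total andbT. Qed.

Lemma qrel_Pw n w (i j : 'I_n) :
  qrel (Pw1 n w) (Pw2 n w) i j = (nth 0 w i <= nth 0 w j).
Proof. by rewrite /qrel /Pw1 /Pw2 -andb_orl leq_total. Qed.

Lemma Pw_wpp n w : weak_plane_poset (Pw1 n w) (Pw2 n w).
Proof.
have ord_anti (i j : 'I_n) : i <= j -> j <= i -> i = j.
  by move=> le_ij le_ji; apply/val_inj/anti_leq; rewrite le_ij le_ji.
split; [split; (split; [|split]) | split].
- by move=> i; rewrite /Pw1 !leqnn.
- by move=> i j /andP[/andP[le_ji _] /andP[le_ij _]]; apply: ord_anti.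
- move=> j i k /andP[le_ji le_wij] /andP[le_kj le_wjk].
  by rewrite /Pw1 (leq_trans le_kj le_ji) (leq_trans le_wij le_wjk).
- by move=> i; rewrite /Pw2 !leqnn.
- by move=> i j /andP[/andP[le_ij _] /andP[le_ji _]]; apply: ord_anti.
- move=> j i k /andP[le_ij le_wij] /andP[le_jk le_wjk].
  by rewrite /Pw2 (leq_trans le_ij le_jk) (leq_trans le_wij le_wjk).
- by move=> i j /andP[le_ji _] /andP[le_ij _]; apply: ord_anti.
- split; [|split] => [i | j i k | i j]; rewrite !qrel_Pw ?leq_total //.
  exact: leq_trans.
Qed.

Lemma Pw_iso_inj n w w' : size w = n -> size w' = n -> packed w -> packed w' ->
  dp_iso (Pw1 n w) (Pw2 n w) (Pw1 n w') (Pw2 n w') -> w = w'.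
Proof.
move=> size_w size_w' w_packed w'_packed [f [_ f_iso]].
have f_id : f =1 id.
  apply: ord_mono_id => i j.
  by rewrite -(llrel_Pw w') -(llrel_Pw w) /llrel (f_iso j i).1 (f_iso i j).2.
apply: packed_eq_pattern => //; first by rewrite size_w size_w'.
move=> i j; rewrite size_w => lt_i lt_j.
rewrite -(qrel_Pw w (Ordinal lt_i) (Ordinal lt_j)).
rewrite -(qrel_Pw w' (Ordinal lt_i) (Ordinal lt_j)).
by rewrite /qrel (f_iso _ _).1 (f_iso _ _).2 !f_id.
Qed.

Theorem mainTheorem3 (n : nat) :
  (* P_w is a weak plane poset with n elements *)
  (forall w : seq nat, size w = n -> packed w ->
     weak_plane_poset (Pw1 n w) (Pw2 n w)) /\
  (* injectivity on isomorphism classes *)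
  (forall w w' : seq nat, size w = n -> size w' = n -> packed w -> packed w' ->
     dp_iso (Pw1 n w) (Pw2 n w) (Pw1 n w') (Pw2 n w') -> w = w') /\
  (* surjectivity, with the explicit description of the inverse *)
  (forall (T : finType) (le1 le2 : rel T), #|T| = n ->
     weak_plane_poset le1 le2 ->
     (is_porder (llrel le1 le2) /\ total (llrel le1 le2)) /\
     exists f : T -> 'I_n,
       [/\ bijective f,
           (forall x y, llrel le1 le2 x y = (f x <= f y)),
           (forall g : T -> 'I_n, bijective g ->
              (forall x y, llrel le1 le2 x y = (g x <= g y)) -> g =1 f),
           (exists w : seq nat, [/\ size w = n, packed w &
              forall x y, (nth 0 w (f x) <= nth 0 w (f y)) = qrel le1 le2 x y]) &
           (forall w : seq nat, size w = n -> packed w ->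
              (forall x y, (nth 0 w (f x) <= nth 0 w (f y)) = qrel le1 le2 x y) ->
              dp_iso le1 le2 (Pw1 n w) (Pw2 n w))]).
Proof.
split=> [w _ _ | ]; first exact: Pw_wpp.
split=> [w w'|T le1 le2 card_T wpp]; first exact: Pw_iso_inj.
have ll_porder := llrel_porder wpp; have ll_total := llrel_total wpp.
have [f [f_bij f_mono]] := total_order_rank card_T ll_porder ll_total.
have [_ [q_trans q_total]] : total_quasi_order (qrel le1 le2).
  by case: wpp => [_ []].
split=> //; exists f; split=> //.
- by move=> g _ g_mono; apply: order_iso_unique f_mono g_mono.
- exact: packed_word_of_preorder q_trans q_total f_bij.
- move=> w _ _ w_pattern.
  apply: (wpp_iso_llrel_qrel wpp (Pw_wpp n w) f_bij) => x y.
    by rewrite llrel_Pw.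
  by rewrite qrel_Pw w_pattern.
Qed.
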